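(* The insurance game built on any stag hunt is solvable by iterated elimination of strictly dominated strategies, and the unique surviving profile is $A^n$ (every player adopts without purchasing insurance). Specifically, $X$ strictly dominates $D$ for every player, and after $D$ is eliminated for all players, $A$ strictly dominates $X$ for every player.
   Context: A stag hunt has players $I=\{1,\dots,n\}$ with strategies $\{A,D\}$, a constant $c\in\mathbb{R}$ and, for each $i$, a function $f_i$ on subsets $T\subseteq I$ with $i\in T$, strictly increasing with respect to inclusion, with $f_i(I)>c$ and $f_i(\{i\})<c$; an adopter ($A$-player) $i$ gets $f_i(T)$ where $T$ is the set of adopters, and a defector ($D$-player) gets $c$. The insurance game built on it has players $I$, each with strategy set $\{A,D,X\}$ ($A$: adopt without insurance; $D$: defect; $X$: purchase insurance, which binds the player to adopt). For a profile $s$ let $T(s)=\{j: s_j\in\{A,X\}\}$ (the adopters); a coordination failure occurs when $T(s)\neq I$. Each player $i$ has an insurance premium $\pi_i>0$ and reimbursement $R_i$, and payoffs are $u_i(s)=c$ if $s_i=D$; $u_i(s)=f_i(T(s))$ if $s_i=A$; $u_i(s)=f_i(T(s))-\pi_i+R_i\cdot\mathbf{1}[T(s)\neq I]$ if $s_i=X$. It is assumed that $\pi_i<f_i(I)-c$ and that $f_i(T)-\pi_i+R_i>c$ for every $T$ with $i\in T\neq I$ (the reimbursement more than covers any loss from adopting plus the premium). A pure strategy $a$ of player $i$ strictly dominates $b$ if $u_i(a,\sigma_{-i})>u_i(b,\sigma_{-i})$ for all profiles $\sigma_{-i}$ of the other players (in the current reduced game). $A^n$ denotes the profile where every player plays $A$.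 *)

From HB Require Import structures.
From mathcomp Require Import all_boot all_order all_algebra.
Set Implicit Arguments. Unset Strict Implicit. Unset Printing Implicit Defensive.
Import Order.TTheory GRing.Theory Num.Theory.
Local Open Scope ring_scope.

Inductive strat := A | D | X.

Definition strat_eqb (a b : strat) : bool :=
  match a, b with A, A | D, D | X, X => true | _, _ => false end.
Lemma strat_eqP : Equality.axiom strat_eqb.
Proof. by case; case; constructor. Qed.
HB.instance Definition _ := hasDecEq.Build strat strat_eqP.

Definition profile (n : nat) := 'I_n -> strat.

Definition adopters n (s : profile n) : {set 'I_n} :=
  [set j | s j != D].

Definition payoff (R : realFieldType) n (c : R) (f : 'I_n -> {set 'I_n} -> R)
    (prem reimb : 'I_n -> R) (s : profile n) (i : 'I_n) : R :=
  match s i with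
  | D => c
  | A => f i (adopters s)
  | X => f i (adopters s) - prem i + (if adopters s != setT then reimb i else 0)
  end.

Definition upd n (s : profile n) (i : 'I_n) (a : strat) : profile n :=
  fun j => if j == i then a else s j.

(* A reduced game is given by the strategy sets S j of each player. *)
Definition sdom (R : realFieldType) n (c : R) f prem reimb
    (S : 'I_n -> pred strat) (i : 'I_n) (a b : strat) : Prop :=
  forall sigma : profile n, (forall j, j != i -> S j (sigma j)) ->
    payoff c f prem reimb (upd sigma i b) i < payoff c f prem reimb (upd sigma i a) i.

Definition S_full n : 'I_n -> pred strat := fun _ _ => true.
Definition S_noD n : 'I_n -> pred strat := fun _ a => a != D.
Definition S_noDX n : 'I_n -> pred strat := fun _ a => (a != D) && (a != X).

Definition insurance_hyps (R : realFieldType) n (c : R)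
    (f : 'I_n -> {set 'I_n} -> R) (prem reimb : 'I_n -> R) : Prop :=
  [/\ (forall i (T T' : {set 'I_n}), i \in T -> T \proper T' -> f i T < f i T'),
      (forall i, c < f i setT),
      (forall i, f i [set i] < c),
      (forall i, 0 < prem i /\ prem i < f i setT - c) &
      (forall i (T : {set 'I_n}), i \in T -> T != setT ->
          c < f i T - prem i + reimb i)].

(* Insurance turns defection into a losing option: if the others all adopt,
   the insured player earns f_i(I) - pi_i > c, and otherwise the reimbursement
   more than covers the shortfall, so X beats D against every profile.  Once
   nobody defects, adoption is unanimous, insurance never pays out, and the
   premium pi_i > 0 makes X strictly worse than A. *)

From HB Require Import structures.
From mathcomp Require Import all_boot all_order all_algebra.
Import Order.TTheory GRing.Theory Num.Theory.
Local Open Scope ring_scope.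

Lemma upd_same n (s : profile n) i a : upd s i a i = a.
Proof. by rewrite /upd eqxx. Qed.

Lemma mem_adopters_upd n (s : profile n) i a :
  a != D -> i \in adopters (upd s i a).
Proof. by rewrite inE upd_same. Qed.

Lemma adopters_upd_setT n (s : profile n) i a :
  a != D -> (forall j, j != i -> s j != D) -> adopters (upd s i a) = setT.
Proof.
move=> aD sD; apply/setP => j; rewrite !inE /upd.
by case: ifPn => // /sD.
Qed.

Section InsuranceDominance.

Variables (R : realFieldType) (n : nat) (c : R).
Variables (f : 'I_n -> {set 'I_n} -> R) (prem reimb : 'I_n -> R).

Lemma X_sdom_D i :
  prem i < f i setT - c ->
  (forall T : {set 'I_n}, i \in T -> T != setT -> c < f i T - prem i + reimb i) ->
  sdom c f prem reimb (@S_full n) i X D.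
Proof.
move=> prem_lt covered sigma _; rewrite /payoff !upd_same.
case: ifP => [|/negbFE/eqP full]; first exact/covered/mem_adopters_upd.
by rewrite full addr0 ltrBrDl addrC -ltrBrDl.
Qed.

Lemma A_sdom_X_noD i : 0 < prem i -> sdom c f prem reimb (@S_noD n) i A X.
Proof.
move=> prem_gt0 sigma noD; rewrite /payoff !upd_same.
by rewrite !adopters_upd_setT // eqxx addr0 ltrBlDr ltrDl.
Qed.

End InsuranceDominance.

Lemma S_noDX_eq_A n (s : profile n) :
  (forall j, S_noDX j (s j)) <-> (forall j, s j = A).
Proof.
split=> [noDX j | allA j]; last by rewrite /S_noDX allA.
by move: (noDX j); rewrite /S_noDX; case: (s j).
Qed.

Theorem theorem5 (R : realFieldType) (n : nat) (c : R)
    (f : 'I_n -> {set 'I_n} -> R) (prem reimb : 'I_n -> R) :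
  insurance_hyps c f prem reimb ->
  [/\ (forall i, sdom c f prem reimb (@S_full n) i X D),
      (forall i, sdom c f prem reimb (@S_noD n) i A X) &
      (forall s : profile n, (forall j, S_noDX j (s j)) <-> (forall j, s j = A))].
Proof.
case=> _ _ _ prem_bounds covered; split=> [i | i | s].
- by apply: X_sdom_D; [case: (prem_bounds i) | exact: covered].
- by apply: A_sdom_X_noD; case: (prem_bounds i).
- exact: S_noDX_eq_A.
Qed.
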